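(* Let $f_0,f_1$ be finitely supported probability distributions on a connected, locally finite graph $G$. Let $\gamma^{(1)},\gamma^{(2)}$ be geodesics in $G$ such that $(e_0(\gamma^{(i)}),e_1(\gamma^{(i)}))\in\mathcal{C}(f_0,f_1)$ for $i=1,2$. Then there are no integers $k_1,k_2$ with $0\le k_i\le L(\gamma^{(i)})-1$ such that both $\gamma^{(1)}(k_1)=\gamma^{(2)}(k_2+1)$ and $\gamma^{(1)}(k_1+1)=\gamma^{(2)}(k_2)$.
   Context: $d$ is the graph distance of $G$. A path of length $n$ is a sequence of vertices $\gamma(0),\dots,\gamma(n)$ with $\gamma(i),\gamma(i+1)$ adjacent; $L(\gamma)=n$, $e_0(\gamma)=\gamma(0)$, $e_1(\gamma)=\gamma(n)$; it is a geodesic if $n=d(\gamma(0),\gamma(n))$. A probability distribution is a function $f:G\to[0,\infty)$ with $\sum_x f(x)=1$. $\Pi(f_0,f_1)$ is the set of couplings ($\pi:G\times G\to[0,\infty)$ with marginals $f_0,f_1$), $\Pi_1(f_0,f_1)$ the set of couplings minimizing $\sum_{x,y}d(x,y)\pi(x,y)$, and $\mathcal{C}(f_0,f_1)=\{(x,y)\in G\times G:\pi(x,y)>0\text{ for some }\pi\in\Pi_1(f_0,f_1)\}$. *)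

From HB Require Import structures.
From mathcomp Require Import all_boot all_order all_algebra.
From mathcomp Require Import all_classical all_reals.
From mathcomp Require Import ereal esum.
Set Implicit Arguments. Unset Strict Implicit. Unset Printing Implicit Defensive.
Import Order.TTheory GRing.Theory Num.Theory.
Local Open Scope classical_set_scope.
Local Open Scope ring_scope.

Section Graph.
Variables (V : choiceType) (adj : rel V).

(* A path of length n = size p is the vertex sequence x :: p,
   gamma(k) = nth x (x :: p) k, e_0 = x, e_1 = last x p. *)
Definition walk (x : V) (p : seq V) : Prop := path adj x p.

Definition connected_graph : Prop :=
  forall x y : V, exists p, path adj x p /\ last x p = y.

Definition locally_finite : Prop :=
  forall x : V, finite_set [set y | adj x y].

Definition walk_of_len (x y : V) (n : nat) : bool :=
  `[< exists p, [/\ path adj x p, last x p = y & size p = n] >].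

(* Graph distance: length of a shortest path (0 if none exists). *)
Definition gdist (x y : V) : nat :=
  match pselect (exists n, walk_of_len x y n) with
  | left h => ex_minn h
  | right _ => 0%N
  end.

Definition geodesic (x : V) (p : seq V) : Prop :=
  path adj x p /\ size p = gdist x (last x p).

Variable R : realType.

Definition fin_prob_distr (f : V -> R) : Prop :=
  [/\ forall x, 0 <= f x,
      finite_set [set x | f x != 0] &
      (\esum_(x in [set: V]) (f x)%:E = 1)%E].

Definition coupling (f0 f1 : V -> R) (pi : V -> V -> R) : Prop :=
  [/\ forall x y, 0 <= pi x y,
      (forall x, \esum_(y in [set: V]) (pi x y)%:E = (f0 x)%:E) &
      (forall y, \esum_(x in [set: V]) (pi x y)%:E = (f1 y)%:E)].

Definition transport_cost (pi : V -> V -> R) : \bar R :=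
  \esum_(z in [set: V * V]) ((gdist z.1 z.2)%:R * pi z.1 z.2)%:E.

Definition optimal_coupling (f0 f1 : V -> R) (pi : V -> V -> R) : Prop :=
  coupling f0 f1 pi /\
  forall pi', coupling f0 f1 pi' -> (transport_cost pi <= transport_cost pi')%E.

Definition opt_support (f0 f1 : V -> R) : set (V * V) :=
  [set z | exists pi, optimal_coupling f0 f1 pi /\ 0 < pi z.1 z.2].

End Graph.

From HB Require Import structures.
From mathcomp Require Import all_boot all_order all_algebra.
From mathcomp Require Import all_classical all_reals.
From mathcomp Require Import ereal esum.
From mathcomp Require Import ring lra zify.
Set Implicit Arguments. Unset Strict Implicit. Unset Printing Implicit Defensive.
Import Order.TTheory GRing.Theory Num.Theory.
Local Open Scope classical_set_scope.
Local Open Scope ring_scope.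

(* Exchanging the tails of two crossing geodesics from x1 to y1 and from x2 to
   y2 gives walks x1 -> y2 and x2 -> y1 of total length L1 + L2 - 2, so
   d(x1, y2) + d(x2, y1) < d(x1, y1) + d(x2, y2).  This is impossible when
   both pairs lie in C(f0, f1): if optimal couplings pi1, pi2 charge them,
   average pi1 and pi2 and move a small mass e from (x1, y1), (x2, y2) onto
   (x1, y2), (x2, y1); the result is again a coupling, strictly cheaper than
   the common optimal cost. *)

Section ExtendedSums.
Variables (R : realType) (T : choiceType).

Lemma esum_ge_term (h : T -> \bar R) t :
  (forall i, 0 <= h i)%E -> (h t <= \esum_(i in [set: T]) h i)%E.
Proof.
move=> h_ge0; apply: esum_ge; exists [set t]; last by rewrite fsbig_set1.
by split; [exact: finite_set1|].
Qed.

Lemma esum_delta (F : T -> R) t : 0 <= F t ->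
  \esum_(i in [set: T]) (F i * (i == t)%:R)%:E = (F t)%:E.
Proof.
move=> Ft_ge0; have h_ge0 : (0 <= (F t * (t == t)%:R)%:E)%E.
  by rewrite eqxx mulr1 lee_fin.
have := esum_set1 (a := fun i => (F i * (i == t)%:R)%:E) h_ge0.
rewrite eqxx mulr1 => <-.
rewrite [RHS]esum_mkcond; apply: eq_esum => i _; rewrite in_set1.
by case: eqP => [->|]; rewrite ?eqxx ?mulr0.
Qed.

Lemma esum_fin_num_of_support (h : T -> R) (F : set T) : finite_set F ->
  (forall i, 0 <= h i) -> (forall i, ~ F i -> h i = 0) ->
  \esum_(i in [set: T]) (h i)%:E \is a fin_num.
Proof.
move=> finF h_ge0 h_out.
have -> : \esum_(i in [set: T]) (h i)%:E = \esum_(i in F) (h i)%:E.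
  rewrite [RHS]esum_mkcond; apply: eq_esum => i _.
  by case: ifPn => //; rewrite notin_setE => /h_out ->.
by rewrite esum_fset// ?fsumEFin// => i _; rewrite lee_fin.
Qed.

Lemma esum_balance (u a b v w c d : T -> R) :
  (forall t, 0 <= u t) -> (forall t, 0 <= a t) -> (forall t, 0 <= b t) ->
  (forall t, 0 <= v t) -> (forall t, 0 <= w t) ->
  (forall t, 0 <= c t) -> (forall t, 0 <= d t) ->
  (forall t, u t + u t + a t + b t = v t + w t + c t + d t) ->
  let S f := \esum_(t in [set: T]) (f t)%:E in
  (S u + S u + S a + S b = S v + S w + S c + S d)%E.
Proof.
move=> u0 a0 b0 v0 w0 c0 d0 uvE S.
have S_add (f g : T -> R) : (forall t, 0 <= f t) -> (forall t, 0 <= g t) ->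
    (S f + S g)%E = S (fun t => f t + g t).
  by move=> f0 g0; rewrite -esumD => [|t _|t _]; rewrite ?lee_fin.
rewrite !S_add; first by apply: eq_esum => t _; rewrite uvE.
all: by move=> t; rewrite ?addr_ge0.
Qed.

End ExtendedSums.

Lemma adde_double_cancel (R : realType) (S : \bar R) (s a b a' b' : R) :
  (0 <= S)%E -> a + b = a' + b' ->
  (S + S + a%:E + b%:E = s%:E + s%:E + a'%:E + b'%:E)%E -> S = s%:E.
Proof.
case: S => [r||] //= _ abE; rewrite -!EFinD => -[rE].
by congr (_%:E); lra.
Qed.

Section Couplings.
Variables (R : realType) (V : choiceType).

Lemma coupling_le_marginals (f0 f1 : V -> R) (pi : V -> V -> R) :
  coupling f0 f1 pi -> forall x y, pi x y <= f0 x /\ pi x y <= f1 y.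
Proof.
move=> [pi_ge0 pi_f0 pi_f1] x y; split; rewrite -lee_fin.
- by rewrite -pi_f0; apply: esum_ge_term => v; rewrite lee_fin.
- rewrite -pi_f1; apply: (@esum_ge_term _ _ (fun v => (pi v y)%:E)) => v.
  by rewrite lee_fin.
Qed.

Lemma transport_cost_fin_num (adj : rel V) (f0 f1 : V -> R)
    (pi : V -> V -> R) :
  fin_prob_distr f0 -> fin_prob_distr f1 -> coupling f0 f1 pi ->
  transport_cost adj pi \is a fin_num.
Proof.
move=> [_ fin0 _] [_ fin1 _] cpl; have [pi_ge0 _ _] := cpl.
apply: (@esum_fin_num_of_support _ _ _
  ([set x | f0 x != 0] `*` [set y | f1 y != 0])).
- exact: finite_setX.
- by move=> z; rewrite mulr_ge0.
- move=> [x y] /= out; have [le0 le1] := coupling_le_marginals cpl x y.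
  suff -> : pi x y = 0 by rewrite mulr0.
  apply/eqP; rewrite eq_le pi_ge0 andbT.
  have [f0x0|nz0] := eqVneq (f0 x) 0; first by rewrite -f0x0.
  have [f1y0|nz1] := eqVneq (f1 y) 0; first by rewrite -f1y0.
  by exfalso; apply: out.
Qed.

End Couplings.

Section SwapPlan.
Variables (R : realType) (V : choiceType).
Variables (p1 p2 : V -> V -> R) (x1 y1 x2 y2 : V) (e : R).

Definition point_mass (a b x y : V) : R := (x == a)%:R * (y == b)%:R.

Definition swap_plan (x y : V) : R :=
  (p1 x y + p2 x y) / 2 + e / 2 *
  (point_mass x1 y2 x y + point_mass x2 y1 x y
   - point_mass x1 y1 x y - point_mass x2 y2 x y).

Local Notation q := swap_plan.
Local Notation "e_[ a , b ]" := (fun x y => e * point_mass a b x y).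

Lemma swap_plan_double x y :
  q x y + q x y + e_[x1, y1] x y + e_[x2, y2] x y =
  p1 x y + p2 x y + e_[x1, y2] x y + e_[x2, y1] x y.
Proof. by rewrite /swap_plan; field. Qed.

Hypotheses (e_ge0 : 0 <= e) (p1_ge0 : forall x y, 0 <= p1 x y)
  (p2_ge0 : forall x y, 0 <= p2 x y).

Lemma point_mass_scaled_ge0 a b x y : 0 <= e_[a, b] x y.
Proof. by rewrite !mulr_ge0. Qed.

Lemma point_mass_scaled_le (p : V -> V -> R) a b x y :
  (forall x y, 0 <= p x y) -> e <= p a b -> e_[a, b] x y <= p x y.
Proof.
move=> p_ge0 e_le; rewrite /point_mass.
by case: eqP => [->|_]; case: eqP => [->|_]; rewrite ?mulr1 ?mulr0 ?mul0r.
Qed.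

Hypotheses (e_le1 : e <= p1 x1 y1) (e_le2 : e <= p2 x2 y2).

Lemma swap_plan_ge0 x y : 0 <= q x y.
Proof.
have := swap_plan_double x y.
have := point_mass_scaled_le x y p1_ge0 e_le1.
have := point_mass_scaled_le x y p2_ge0 e_le2.
have := point_mass_scaled_ge0 x1 y2 x y; have := point_mass_scaled_ge0 x2 y1 x y.
rewrite /=; move: (e * _) (e * _) (e * _) (e * _) => A B C D; lra.
Qed.

(* All three sums defining a coupling and its cost are weighted sums of this
   shape: rows and columns with [w = 1], the cost with [w] the distance. *)
Lemma esum_swap_plan (T : choiceType) (w : T -> R) (phi : T -> V * V) :
  (forall t, 0 <= w t) ->
  let S h := \esum_(t in [set: T]) (w t * h (phi t).1 (phi t).2)%:E in
  (S q + S q + S e_[x1, y1] + S e_[x2, y2] =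
   S p1 + S p2 + S e_[x1, y2] + S e_[x2, y1])%E.
Proof.
move=> w_ge0; apply: esum_balance => [t|t|t|t|t|t|t|t];
  rewrite ?mulr_ge0 ?swap_plan_ge0 ?point_mass_scaled_ge0 //.
by rewrite -!mulrDr swap_plan_double.
Qed.

Lemma esum_point_mass_row a b x :
  \esum_(y in [set: V]) (1 * e_[a, b] x y)%:E = (e * (x == a)%:R)%:E.
Proof.
under eq_esum do rewrite mul1r /point_mass mulrA.
by apply: esum_delta; rewrite mulr_ge0.
Qed.

Lemma esum_point_mass_col a b y :
  \esum_(x in [set: V]) (1 * e_[a, b] x y)%:E = (e * (y == b)%:R)%:E.
Proof.
under eq_esum do rewrite mul1r /point_mass mulrA mulrAC.
by apply: esum_delta; rewrite mulr_ge0.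
Qed.

Lemma esum_point_mass_weighted (w : V * V -> R) a b : 0 <= w (a, b) ->
  \esum_(z in [set: V * V]) (w z * e_[a, b] z.1 z.2)%:E = (w (a, b) * e)%:E.
Proof.
move=> w_ge0; rewrite -(@esum_delta _ _ (fun z => w z * e) (a, b)).
  apply: eq_esum => -[x y] _; rewrite /point_mass /= xpair_eqE.
  by case: eqP; case: eqP; rewrite ?mulr1 ?mulr0 ?mul0r.
by rewrite mulr_ge0.
Qed.

End SwapPlan.

Section SwapCoupling.
Variables (R : realType) (V : choiceType) (adj : rel V) (f0 f1 : V -> R).
Variables (p1 p2 : V -> V -> R) (x1 y1 x2 y2 : V) (e : R).
Hypotheses (cpl1 : coupling f0 f1 p1) (cpl2 : coupling f0 f1 p2).
Hypotheses (e_ge0 : 0 <= e) (e_le1 : e <= p1 x1 y1) (e_le2 : e <= p2 x2 y2).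

Local Notation q := (swap_plan p1 p2 x1 y1 x2 y2 e).

Lemma swap_plan_coupling : coupling f0 f1 q.
Proof.
have [p1_ge0 p1_f0 p1_f1] := cpl1; have [p2_ge0 p2_f0 p2_f1] := cpl2.
have q_ge0 := swap_plan_ge0 e_ge0 p1_ge0 p2_ge0 e_le1 e_le2.
have esum_mul1 (g : V -> R) :
    \esum_(v in [set: V]) (1 * g v)%:E = \esum_(v in [set: V]) (g v)%:E.
  by apply: eq_esum => v _; rewrite mul1r.
have esum_EFin_ge0 (g : V -> R) : (forall v, 0 <= g v) ->
    (0 <= \esum_(v in [set: V]) (g v)%:E)%E.
  by move=> g_ge0; apply: esum_ge0 => v _; rewrite lee_fin.
split=> [//|x|y].
- have := esum_swap_plan e_ge0 p1_ge0 p2_ge0 e_le1 e_le2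
    (w := fun _ => 1) (fun y => (x, y)) (fun _ => ler01).
  rewrite /= !(esum_point_mass_row e_ge0) !esum_mul1.
  rewrite p1_f0 p2_f0; apply: adde_double_cancel => //.
  exact: esum_EFin_ge0.
- have := esum_swap_plan e_ge0 p1_ge0 p2_ge0 e_le1 e_le2
    (w := fun _ => 1) (fun x => (x, y)) (fun _ => ler01).
  rewrite /= !(esum_point_mass_col e_ge0) !esum_mul1.
  rewrite p1_f1 p2_f1; apply: adde_double_cancel; last by rewrite addrC.
  exact: esum_EFin_ge0.
Qed.

Lemma swap_plan_cost :
  let d a b := (gdist adj a b)%:R * e in
  (transport_cost adj q + transport_cost adj q + (d x1 y1)%:E + (d x2 y2)%:E =
   transport_cost adj p1 + transport_cost adj p2 + (d x1 y2)%:E + (d x2 y1)%:E)%E.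
Proof.
have [p1_ge0 _ _] := cpl1; have [p2_ge0 _ _] := cpl2.
pose d (z : V * V) : R := (gdist adj z.1 z.2)%:R.
have := esum_swap_plan e_ge0 p1_ge0 p2_ge0 e_le1 e_le2
  (w := d) id (fun _ => ler0n _ _).
by rewrite /= !(esum_point_mass_weighted e_ge0 (w := d)).
Qed.

End SwapCoupling.

Lemma opt_support_cyclically_monotone (R : realType) (V : choiceType)
    (adj : rel V) (f0 f1 : V -> R) (x1 y1 x2 y2 : V) :
  fin_prob_distr f0 -> fin_prob_distr f1 ->
  opt_support adj f0 f1 (x1, y1) -> opt_support adj f0 f1 (x2, y2) ->
  (gdist adj x1 y1 + gdist adj x2 y2 <= gdist adj x1 y2 + gdist adj x2 y1)%N.
Proof.
move=> hf0 hf1 [p1 [[cpl1 opt1] /= p1_gt0]] [p2 [[cpl2 opt2] /= p2_gt0]].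
rewrite leqNgt; apply/negP => swap_shorter.
pose e := Num.min (p1 x1 y1) (p2 x2 y2).
have e_gt0 : 0 < e by rewrite lt_min p1_gt0 p2_gt0.
have e_le1 : e <= p1 x1 y1 by rewrite ge_min lexx.
have e_le2 : e <= p2 x2 y2 by rewrite ge_min lexx orbT.
have cost_q := swap_plan_cost adj cpl1 cpl2 (ltW e_gt0) e_le1 e_le2.
have cpl_q := swap_plan_coupling cpl1 cpl2 (ltW e_gt0) e_le1 e_le2.
have le12 := opt1 _ cpl2; have le21 := opt2 _ cpl1; have le1q := opt1 _ cpl_q.
have cost1_fin := transport_cost_fin_num adj hf0 hf1 cpl1.
have gain : (gdist adj x1 y2)%:R * e + (gdist adj x2 y1)%:R * e <
            (gdist adj x1 y1)%:R * e + (gdist adj x2 y2)%:R * e.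
  by rewrite -!mulrDl ltr_pM2r // -!natrD ltr_nat.
move: cost_q le12 le21 le1q cost1_fin gain => /=.
move: (transport_cost _ (swap_plan _ _ _ _ _ _ _)) (transport_cost adj p1)
  (transport_cost adj p2) => [s||] [c1||] [c2||] //=.
rewrite -!EFinD !lee_fin => -[]; lra.
Qed.

Section Geodesics.
Variables (V : choiceType) (adj : rel V).

Lemma last_take_nth (x : V) (p : seq V) k : (k <= size p)%N ->
  last x (take k p) = nth x (x :: p) k.
Proof.
elim: p x k => [|y p IH] x [|k] //= k_le.
by rewrite IH // (set_nth_default y).
Qed.

Lemma gdist_le_size (x : V) (p : seq V) : path adj x p ->
  (gdist adj x (last x p) <= size p)%N.
Proof.
move=> xp; rewrite /gdist; case: pselect => [ex|[]]; last first.
  by exists (size p); apply/asboolP; exists p.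
by case: ex_minnP => m _; apply; apply/asboolP; exists p.
Qed.

(* Follow [x :: p] up to its [k]-th vertex, then [x' :: p'] from its
   [k'.+1]-th vertex (the same vertex) to its end. *)
Lemma gdist_le_splice (x x' : V) (p p' : seq V) k k' :
  path adj x p -> path adj x' p' -> (k <= size p)%N -> (k' < size p')%N ->
  nth x (x :: p) k = nth x' (x' :: p') k'.+1 ->
  (gdist adj x (last x' p') <= k + (size p' - k'.+1))%N.
Proof.
move=> xp x'p' k_le k'_lt meet.
have junction : last x (take k p) = last x' (take k'.+1 p').
  by rewrite !last_take_nth.
have tail_path : path adj (last x' (take k'.+1 p')) (drop k'.+1 p').
  by move: x'p'; rewrite -{1}(cat_take_drop k'.+1 p') cat_path => /andP[].
have -> : last x' p' = last x (take k p ++ drop k'.+1 p').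
  by rewrite last_cat junction -last_cat cat_take_drop.
have -> : (k + (size p' - k'.+1) = size (take k p ++ drop k'.+1 p'))%N.
  by rewrite size_cat size_takel // size_drop.
by apply: gdist_le_size; rewrite cat_path take_path //= junction.
Qed.

End Geodesics.

Theorem theorem2p11 (R : realType) (V : choiceType) (adj : rel V)
  (adj_sym : symmetric adj) (adj_irr : irreflexive adj)
  (Gconn : connected_graph adj) (Glf : locally_finite adj)
  (f0 f1 : V -> R)
  (hf0 : fin_prob_distr f0) (hf1 : fin_prob_distr f1)
  (x1 : V) (p1 : seq V) (x2 : V) (p2 : seq V)
  (geo1 : geodesic adj x1 p1) (geo2 : geodesic adj x2 p2)
  (C1 : opt_support adj f0 f1 (x1, last x1 p1))
  (C2 : opt_support adj f0 f1 (x2, last x2 p2)) :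
  ~ exists k1 k2 : nat,
      [/\ (k1 < size p1)%N, (k2 < size p2)%N,
          nth x1 (x1 :: p1) k1 = nth x2 (x2 :: p2) k2.+1 &
          nth x1 (x1 :: p1) k1.+1 = nth x2 (x2 :: p2) k2].
Proof.
move=> [k1 [k2 [k1_lt k2_lt meet12 meet21]]].
have [path1 len1] := geo1; have [path2 len2] := geo2.
have := opt_support_cyclically_monotone hf0 hf1 C1 C2.
have := gdist_le_splice path1 path2 (ltnW k1_lt) k2_lt meet12.
have := gdist_le_splice path2 path1 (ltnW k2_lt) k1_lt (esym meet21).
rewrite -len1 -len2; lia.
Qed.
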